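(* Fix $\rho\in\Gamma$. Suppose that $(Y^{(1)},\nu^{(1)}_{ij},\mu^{(1)}_{ij},\nu^{(1)}_{i0},\mu^{(1)}_{0i})$ and $(Y^{(2)},\nu^{(2)}_{ij},\mu^{(2)}_{ij},\nu^{(2)}_{i0},\mu^{(2)}_{0i})$ (with $Y^{(k)}=Y^{(k)\prime}>0$, all constants positive, $j\in S^\varphi_i$, $i=1,\dots,N$, $\nu_{i0}$ defined for $i$ with $d_i=1$ and $\mu_{0i}$ for $i$ with $\bar d_i=1$) both satisfy $\Upsilon_i<0$ for all $i=1,\dots,N$. For $\gamma\in[0,1]$ define $Y_\gamma=\gamma Y^{(1)}+(1-\gamma)Y^{(2)}$, $\nu_{ij,\gamma}=[\gamma(\nu^{(1)}_{ij})^{-1}+(1-\gamma)(\nu^{(2)}_{ij})^{-1}]^{-1}$, $\mu_{ij,\gamma}=[\gamma(\mu^{(1)}_{ij})^{-1}+(1-\gamma)(\mu^{(2)}_{ij})^{-1}]^{-1}$, and similarly $\nu_{i0,\gamma}$ (for $d_i=1$) and $\mu_{0i,\gamma}$ (for $\bar d_i=1$). Then $(Y_\gamma,\nu_{ij,\gamma},\mu_{ij,\gamma},\nu_{i0,\gamma},\mu_{0i,\gamma})$ also satisfies $\Upsilon_i<0$ for all $i=1,\dots,N$.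
   Context: Graphs: node set $\mathcal{V}=\{0,\dots,N\}$, followers $\mathcal{V}_0=\{1,\dots,N\}$; directed interconnection graph with edge set $\mathcal{E}^\varphi$ ($(j,i)$ = edge from $j$ to $i$). For $i\in\mathcal{V}_0$: $S^\varphi_i=\{j\in\mathcal{V}_0:(j,i)\in\mathcal{E}^\varphi\}$; $d_i=1$ if $(0,i)\in\mathcal{E}^\varphi$ else $0$; $\bar d_i=1$ if $(i,0)\in\mathcal{E}^\varphi$ else $0$. Data: $\Gamma=[\rho_{\min},\rho_{\max}]$, continuous $A:\Gamma\to\mathbb{R}^{n\times n}$, $B_1\in\mathbb{R}^{n\times p}$, $B_2\in\mathbb{R}^{n\times m}$, matrices $C_{ij}\in\mathbb{R}^{q_{ij}\times n}$ for $(j,i)\in\mathcal{E}^\varphi$, $R=R'>0$, and a fixed matrix $\bar Q=\bar Q'>0$ (in the paper $\bar Q=(\sigma^2/\hat\lambda)Q$ for a weighting matrix $Q>0$ and graph-dependent positive constants $\sigma,\hat\lambda$). For $i\in\mathcal{V}_0$: $\hat C_i$ stacks $C_{ij}$ over $j\in S^\varphi_i$ and $\Phi_i=\mathrm{diag}[\nu_{ij}^{-1}I,\ j\in S^\varphi_i]$; $\bar C_i$ stacks $C_{ri}$ over $r\in\mathcal{V}_0$ with $i\in S^\varphi_r$, and $\Omega_i=\mathrm{diag}[\mu_{ri}^{-1}I]$ over the same $r$. Define $Z_i=A(\rho)Y+YA(\rho)'-B_1R^{-1}B_1'+\big(\sum_{j\in S^\varphi_i}(\nu_{ij}^{-1}+\mu_{ij}^{-1})+d_i\nu_{i0}^{-1}+\sum_{k\in\mathcal{V}_0:\bar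 d_k=1}\mu_{0k}^{-1}\big)B_2B_2'$ (the $\nu_{i0}$ term absent if $d_i=0$), and $$\Upsilon_i=\begin{bmatrix}Z_i & Y\bar Q^{1/2} & Y\hat C_i' & Y\bar C_i' & YC_{i0}' & YC_{0i}'\\ \bar Q^{1/2}Y & -I & 0&0&0&0\\ \hat C_iY&0&-\Phi_i&0&0&0\\ \bar C_iY&0&0&-\Omega_i&0&0\\ C_{i0}Y&0&0&0&-\nu_{i0}^{-1}I&0\\ C_{0i}Y&0&0&0&0&-(N\mu_{0i})^{-1}I\end{bmatrix},$$ where the block row/column with $C_{i0}$ is present only if $d_i=1$ and the one with $C_{0i}$ only if $\bar d_i=1$. *)

From HB Require Import structures.
From mathcomp Require Import all_boot all_order all_algebra.
From mathcomp Require Import all_classical all_reals topology normedtype.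
Set Implicit Arguments. Unset Strict Implicit. Unset Printing Implicit Defensive.
Import Order.TTheory GRing.Theory Num.Theory.
Local Open Scope ring_scope.

Definition posdef (R : numDomainType) (k : nat) (M : 'M[R]_k) : Prop :=
  M^T = M /\ forall x : 'cV[R]_k, x != 0 -> 0 < (x^T *m M *m x) 0 0.
Definition negdef (R : numDomainType) (k : nat) (M : 'M[R]_k) : Prop :=
  posdef (- M).

(* A "block" of an arrow-shaped LMI: a matrix C (q x n) and a scalar w;
   it contributes the off-diagonal blocks C Y and Y C' and the diagonal
   block -w I. *)
Definition blk (R : numDomainType) (n : nat) := ({q : nat & 'M[R]_(q, n)} * R)%type.

Fixpoint btot (R : numDomainType) n (bs : seq (blk R n)) : nat :=
  if bs is b :: bs' then (projT1 b.1 + btot bs')%N else 0%N.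

Fixpoint bstack (R : numDomainType) n (bs : seq (blk R n)) : 'M[R]_(btot bs, n) :=
  match bs return 'M[R]_(btot bs, n) with
  | [::] => 0
  | b :: bs' => col_mx (projT2 b.1) (bstack bs')
  end.

Fixpoint bdiag (R : numDomainType) n (bs : seq (blk R n)) : 'M[R]_(btot bs) :=
  match bs return 'M[R]_(btot bs) with
  | [::] => 0
  | b :: bs' => block_mx (b.2%:M) 0 0 (bdiag bs')
  end.

Definition arrow_mx (R : numDomainType) n (Z Y : 'M[R]_n) (bs : seq (blk R n))
  : 'M[R]_(n + btot bs) :=
  block_mx Z (Y *m (bstack bs)^T) (bstack bs *m Y) (- bdiag bs).

(* Nodes are 'I_N.+1, node ord0 is the leader 0; E j i means (j,i) is an edge. *)
Definition followers N : seq 'I_N.+1 := [seq i <- enum 'I_N.+1 | i != ord0].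
Definition Sphi N (E : rel 'I_N.+1) (i : 'I_N.+1) : seq 'I_N.+1 :=
  [seq j <- enum 'I_N.+1 | (j != ord0) && E j i].
Definition Sout N (E : rel 'I_N.+1) (i : 'I_N.+1) : seq 'I_N.+1 :=
  [seq r <- enum 'I_N.+1 | (r != ord0) && E i r].

Section Ups.
Variables (R : realType) (n p m N : nat).
Variables (A : 'M[R]_n) (B1 : 'M[R]_(n, p)) (B2 : 'M[R]_(n, m)) (Rw : 'M[R]_p)
  (Qh : 'M[R]_n) (E : rel 'I_N.+1) (q : 'I_N.+1 -> 'I_N.+1 -> nat)
  (C : forall i j : 'I_N.+1, 'M[R]_(q i j, n)).
(* nu i j = nu_{ij}, nu i 0 = nu_{i0}; mu i j = mu_{ij}, mu 0 i = mu_{0i} *)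
Variables (nu mu : 'I_N.+1 -> 'I_N.+1 -> R) (Y : 'M[R]_n).

Definition Zcoef (i : 'I_N.+1) : R :=
  \sum_(j <- Sphi E i) ((nu i j)^-1 + (mu i j)^-1)
  + (if E ord0 i then (nu i ord0)^-1 else 0)
  + \sum_(k <- followers N | E k ord0) (mu ord0 k)^-1.

Definition Zmat (i : 'I_N.+1) : 'M[R]_n :=
  A *m Y + Y *m A^T - B1 *m invmx Rw *m B1^T + Zcoef i *: (B2 *m B2^T).

Definition mkblk (k : nat) (M : 'M[R]_(k, n)) (w : R) : blk R n :=
  (existT (fun k => 'M[R]_(k, n)) k M, w).

Definition Ublocks (i : 'I_N.+1) : seq (blk R n) :=
  [:: mkblk Qh 1]
  ++ [seq mkblk (C i j) (nu i j)^-1 | j <- Sphi E i]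
  ++ [seq mkblk (C r i) (mu r i)^-1 | r <- Sout E i]
  ++ (if E ord0 i then [:: mkblk (C i ord0) (nu i ord0)^-1] else [::])
  ++ (if E i ord0 then [:: mkblk (C ord0 i) (N%:R * mu ord0 i)^-1] else [::]).

(* Upsilon_i (evaluated at the fixed rho, A = A(rho); Qh = Qbar^{1/2}) *)
Definition Upsilon (i : 'I_N.+1) : 'M[R]_(n + btot (Ublocks i)) :=
  arrow_mx (Zmat i) Y (Ublocks i).
End Ups.

Definition pos_consts (R : realType) N (E : rel 'I_N.+1) (nu mu : 'I_N.+1 -> 'I_N.+1 -> R) : Prop :=
  (forall i j : 'I_N.+1, i != ord0 -> j != ord0 -> E j i -> 0 < nu i j /\ 0 < mu i j)
  /\ (forall i : 'I_N.+1, i != ord0 -> E ord0 i -> 0 < nu i ord0)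
  /\ (forall i : 'I_N.+1, i != ord0 -> E i ord0 -> 0 < mu ord0 i).

Definition hcomb (R : realType) (gamma a b : R) : R :=
  (gamma * a^-1 + (1 - gamma) * b^-1)^-1.

From HB Require Import structures.
From mathcomp Require Import all_boot all_order all_algebra.
From mathcomp Require Import all_classical all_reals topology normedtype.
From mathcomp Require Import ring lra.
Import Order.TTheory GRing.Theory Num.Theory numFieldNormedType.Exports.
Local Open Scope ring_scope.

(* Every ingredient of [Upsilon i] is affine in [Y] and in the reciprocals of the
   constants, and the block structure of [Upsilon i] does not depend on them.
   The harmonic combination of the constants is exactly the convex combination
   of their reciprocals, so [Upsilon i] of the combined data is the convex
   combination of the two given matrices, which is negative definite because
   the negative definite cone is convex. *)

Section ConvexCone.
Variable R : realFieldType.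

Lemma posdef_conv k (M1 M2 : 'M[R]_k) g : 0 <= g <= 1 ->
  posdef M1 -> posdef M2 -> posdef (g *: M1 + (1 - g) *: M2).
Proof.
move=> /andP[g0 g1] [sym1 pos1] [sym2 pos2]; split.
  by rewrite linearD !linearZ /= sym1 sym2.
move=> x x0; have := pos1 x x0; have := pos2 x x0.
rewrite mulmxDr mulmxDl -!scalemxAr -!scalemxAl !mxE.
move: (\sum_j _) (\sum_j _) => q2 q1 q2_gt0 q1_gt0; nra.
Qed.

Lemma negdef_conv k (M1 M2 : 'M[R]_k) g : 0 <= g <= 1 ->
  negdef M1 -> negdef M2 -> negdef (g *: M1 + (1 - g) *: M2).
Proof.
move=> g01 neg1 neg2; rewrite /negdef opprD -!scalerN.
exact: posdef_conv.
Qed.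

End ConvexCone.

Section ArrowShape.
Set Implicit Arguments.
Unset Strict Implicit.
Variables (R : realType) (n : nat).

(* The weight-free part of a list of blocks; the dimension of an arrow matrix
   depends only on it, which lets us compare arrow matrices of lists with the
   same shape but different weights. *)
Notation shape := (seq {q : nat & 'M[R]_(q, n)}).

Fixpoint shape_tot (s : shape) : nat :=
  if s is b :: s' then (projT1 b + shape_tot s')%N else 0%N.

Fixpoint shape_stack (s : shape) : 'M[R]_(shape_tot s, n) :=
  match s return 'M[R]_(shape_tot s, n) with
  | [::] => 0
  | b :: s' => col_mx (projT2 b) (shape_stack s')
  end.

Fixpoint shape_diag (s : shape) (ws : seq R) : 'M[R]_(shape_tot s) :=
  match s return 'M[R]_(shape_tot s) with
  | [::] => 0
  | b :: s' => block_mx (head 0 ws)%:M 0 0 (shape_diag s' (behead ws))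
  end.

Definition shape_arrow (Z Y : 'M[R]_n) (s : shape) (ws : seq R)
  : 'M[R]_(n + shape_tot s) :=
  block_mx Z (Y *m (shape_stack s)^T) (shape_stack s *m Y) (- shape_diag s ws).

Lemma bstack_bdiag_shape (bs : seq (blk R n))
    (P : forall k, 'M[R]_(k, n) -> 'M[R]_k -> Prop) :
  P _ (bstack bs) (bdiag bs) <->
  P _ (shape_stack (map fst bs)) (shape_diag (map fst bs) (map snd bs)).
Proof.
elim: bs P => [|b bs IH] P //=.
exact: (IH (fun k S D =>
  P (projT1 b.1 + k)%N (col_mx (projT2 b.1) S) (block_mx b.2%:M 0 0 D))).
Qed.

Lemma negdef_arrow_mxE (Z Y : 'M[R]_n) (bs : seq (blk R n)) :
  negdef (arrow_mx Z Y bs) <->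
  negdef (shape_arrow Z Y (map fst bs) (map snd bs)).
Proof.
exact: (bstack_bdiag_shape bs
  (fun k S D => negdef (block_mx Z (Y *m S^T) (S *m Y) (- D)))).
Qed.

Fixpoint blk_comb (g : R) (bs1 bs2 bs3 : seq (blk R n)) : Prop :=
  match bs1, bs2, bs3 with
  | b1 :: bs1', b2 :: bs2', b3 :: bs3' =>
      [/\ b1.1 = b3.1, b2.1 = b3.1, b3.2 = g * b1.2 + (1 - g) * b2.2
        & blk_comb g bs1' bs2' bs3']
  | [::], [::], [::] => True
  | _, _, _ => False
  end.

Lemma blk_comb_cat g bs1 bs2 bs3 cs1 cs2 cs3 :
  blk_comb g bs1 bs2 bs3 -> blk_comb g cs1 cs2 cs3 ->
  blk_comb g (bs1 ++ cs1) (bs2 ++ cs2) (bs3 ++ cs3).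
Proof.
elim: bs1 bs2 bs3 => [|b1 bs1 IH] [|b2 bs2] [|b3 bs3] //= [-> -> -> comb] combc.
by split => //; apply: IH.
Qed.

Lemma blk_comb_map (T : Type) g (s : seq T) (f1 f2 f3 : T -> blk R n) :
  (forall t, [/\ (f1 t).1 = (f3 t).1, (f2 t).1 = (f3 t).1 &
     (f3 t).2 = g * (f1 t).2 + (1 - g) * (f2 t).2]) ->
  blk_comb g (map f1 s) (map f2 s) (map f3 s).
Proof. by move=> f3E; elim: s => //= t s IH; case: (f3E t). Qed.

Lemma blk_comb_shape g bs1 bs2 bs3 : blk_comb g bs1 bs2 bs3 ->
  map fst bs1 = map fst bs3 /\ map fst bs2 = map fst bs3.
Proof.
elim: bs1 bs2 bs3 => [|b1 bs1 IH] [|b2 bs2] [|b3 bs3] //= [-> -> _ /IH[-> ->]] //.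
Qed.

Lemma shape_diag_comb g bs1 bs2 bs3 : blk_comb g bs1 bs2 bs3 ->
  shape_diag (map fst bs3) (map snd bs3) =
  g *: shape_diag (map fst bs3) (map snd bs1)
  + (1 - g) *: shape_diag (map fst bs3) (map snd bs2).
Proof.
elim: bs3 bs1 bs2 => [|b3 bs3 IH] [|b1 bs1] [|b2 bs2] //=.
  by rewrite !scaler0 addr0.
case=> _ _ b3E /IH ->; rewrite !scale_block_mx add_block_mx !scaler0 !addr0.
by rewrite b3E !scale_scalar_mx raddfD.
Qed.

Lemma shape_arrow_comb g (Z1 Z2 Y1 Y2 : 'M[R]_n) s ws1 ws2 ws3 :
  shape_diag s ws3 = g *: shape_diag s ws1 + (1 - g) *: shape_diag s ws2 ->
  shape_arrow (g *: Z1 + (1 - g) *: Z2) (g *: Y1 + (1 - g) *: Y2) s ws3 =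
  g *: shape_arrow Z1 Y1 s ws1 + (1 - g) *: shape_arrow Z2 Y2 s ws2.
Proof.
move=> ws3E; rewrite /shape_arrow ws3E !scale_block_mx add_block_mx.
by rewrite mulmxDr mulmxDl -!scalemxAr -!scalemxAl opprD -!scalerN.
Qed.

Lemma negdef_arrow_mx_comb g (Z1 Z2 Y1 Y2 : 'M[R]_n) bs1 bs2 bs3 :
  0 <= g <= 1 -> blk_comb g bs1 bs2 bs3 ->
  negdef (arrow_mx Z1 Y1 bs1) -> negdef (arrow_mx Z2 Y2 bs2) ->
  negdef (arrow_mx (g *: Z1 + (1 - g) *: Z2) (g *: Y1 + (1 - g) *: Y2) bs3).
Proof.
move=> g01 comb; have [shape1 shape2] := blk_comb_shape comb.
rewrite !negdef_arrow_mxE shape1 shape2 (shape_arrow_comb _ _ _ _ (shape_diag_comb comb)).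
exact: negdef_conv.
Qed.

End ArrowShape.

Section UpsilonComb.
Variables (R : realType) (n p m N : nat) (A : 'M[R]_n) (B1 : 'M[R]_(n, p))
  (B2 : 'M[R]_(n, m)) (Rw : 'M[R]_p) (Qh : 'M[R]_n) (E : rel 'I_N.+1)
  (q : 'I_N.+1 -> 'I_N.+1 -> nat) (C : forall i j : 'I_N.+1, 'M[R]_(q i j, n))
  (nu1 mu1 nu2 mu2 : 'I_N.+1 -> 'I_N.+1 -> R) (g : R).

Let nug a b := hcomb g (nu1 a b) (nu2 a b).
Let mug a b := hcomb g (mu1 a b) (mu2 a b).

Lemma hcombV (a b : R) : (hcomb g a b)^-1 = g * a^-1 + (1 - g) * b^-1.
Proof. by rewrite /hcomb invrK. Qed.

Lemma Ublocks_comb i :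
  blk_comb g (Ublocks Qh E C nu1 mu1 i) (Ublocks Qh E C nu2 mu2 i)
    (Ublocks Qh E C nug mug i).
Proof.
rewrite /Ublocks; apply: blk_comb_cat; first by split => //; ring.
apply: blk_comb_cat; first by apply: blk_comb_map => j /=; rewrite hcombV.
apply: blk_comb_cat; first by apply: blk_comb_map => j /=; rewrite hcombV.
apply: blk_comb_cat; first by case: (E ord0 i) => //=; rewrite hcombV.
by case: (E i ord0) => //=; split => //; rewrite !invfM hcombV; ring.
Qed.

Lemma Zcoef_comb i :
  Zcoef E nug mug i = g * Zcoef E nu1 mu1 i + (1 - g) * Zcoef E nu2 mu2 i.
Proof.
have big_comb (I : eqType) (r : seq I) (P : pred I) (F1 F2 F : I -> R) :
    (forall j, F j = g * F1 j + (1 - g) * F2 j) ->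
    \sum_(j <- r | P j) F j =
    g * \sum_(j <- r | P j) F1 j + (1 - g) * \sum_(j <- r | P j) F2 j.
  by move=> FE; rewrite !mulr_sumr -big_split; apply: eq_bigr => j _; exact: FE.
rewrite /Zcoef (big_comb _ _ _ (fun j => (nu1 i j)^-1 + (mu1 i j)^-1)
  (fun j => (nu2 i j)^-1 + (mu2 i j)^-1)); last by move=> j; rewrite /nug /mug !hcombV; ring.
rewrite (big_comb _ _ _ (fun k => (mu1 ord0 k)^-1) (fun k => (mu2 ord0 k)^-1)
  (fun k => (mug ord0 k)^-1));
  last by move=> k; rewrite /mug hcombV.
by case: (E ord0 i); rewrite /nug ?hcombV; ring.
Qed.

Lemma Zmat_comb (Y1 Y2 : 'M[R]_n) i :
  Zmat A B1 B2 Rw E nug mug (g *: Y1 + (1 - g) *: Y2) i =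
  g *: Zmat A B1 B2 Rw E nu1 mu1 Y1 i + (1 - g) *: Zmat A B1 B2 Rw E nu2 mu2 Y2 i.
Proof.
rewrite /Zmat Zcoef_comb mulmxDr mulmxDl -!scalemxAr -!scalemxAl.
by apply/matrixP => a b; rewrite !mxE; ring.
Qed.

End UpsilonComb.

Local Open Scope classical_set_scope.

Theorem lemma1 (R : realType) (n p m N : nat) (rmin rmax : R)
  (A : R -> 'M[R]_n) (B1 : 'M[R]_(n, p)) (B2 : 'M[R]_(n, m))
  (E : rel 'I_N.+1) (q : 'I_N.+1 -> 'I_N.+1 -> nat)
  (C : forall i j : 'I_N.+1, 'M[R]_(q i j, n))
  (Rw : 'M[R]_p) (Qbar Qh : 'M[R]_n) (rho : R)
  (Y1 Y2 : 'M[R]_n) (nu1 mu1 nu2 mu2 : 'I_N.+1 -> 'I_N.+1 -> R) :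
  (forall i j : 'I_n, {within `[rmin, rmax], continuous (fun r => A r i j)}) ->
  posdef Rw -> posdef Qbar -> posdef Qh -> Qh *m Qh = Qbar ->
  (rmin <= rho <= rmax)%R ->
  posdef Y1 -> posdef Y2 ->
  pos_consts E nu1 mu1 -> pos_consts E nu2 mu2 ->
  (forall i : 'I_N.+1, i != ord0 ->
     negdef (Upsilon (A rho) B1 B2 Rw Qh E C nu1 mu1 Y1 i)) ->
  (forall i : 'I_N.+1, i != ord0 ->
     negdef (Upsilon (A rho) B1 B2 Rw Qh E C nu2 mu2 Y2 i)) ->
  forall gamma : R, (0 <= gamma <= 1)%R ->
  forall i : 'I_N.+1, i != ord0 ->
    negdef (Upsilon (A rho) B1 B2 Rw Qh E C
              (fun a b => hcomb gamma (nu1 a b) (nu2 a b))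
              (fun a b => hcomb gamma (mu1 a b) (mu2 a b))
              (gamma *: Y1 + (1 - gamma) *: Y2) i).
Proof.
move=> _ _ _ _ _ _ _ _ _ _ neg1 neg2 g g01 i i_gt0.
rewrite /Upsilon Zmat_comb.
exact: negdef_arrow_mx_comb (Ublocks_comb _ _ _ _ _ _ _ _ _)
  (neg1 i i_gt0) (neg2 i i_gt0).
Qed.
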